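(* Suppose every $f_i$ is monotone and submodular. Let $S^{(1)}_{\rm tr},S^{(1)}_1,\dots,S^{(1)}_m$ be the output of Algorithm 1 and $S^{(2)}_{\rm tr},S^{(2)}_1,\dots,S^{(2)}_m$ the output of Algorithm 2. Set $\theta_1=\sum_i f_i(S^{(1)}_{\rm tr}\cup S^{(1)}_i)$, $\theta_2=\sum_i f_i(S^{(2)}_{\rm tr}\cup S^{(2)}_i)$, $\beta=\sum_i f_i(S^{(1)}_{\rm tr})$, $\gamma=\sum_i f_i(S^{(2)}_i)$. Then $$\theta_1\ge (1-1/e)(\mathrm{OPT}-\gamma)+\beta-2(\theta_2-\gamma)\quad\text{and}\quad \theta_2\ge (1-1/e)(\mathrm{OPT}-\beta)+\gamma-2(\theta_1-\beta).$$
   Context: $V$ is a finite ground set with $|V|=n$; $k,l$ are integers with $1\le l<k\le n$. For $i=1,\dots,m$, $f_i:2^V\to\mathbb{R}_{\ge 0}$; monotone means $A\subseteq B\Rightarrow f_i(A)\le f_i(B)$, submodular means $f_i(A)+f_i(B)\ge f_i(A\cup B)+f_i(A\cap B)$. Write $\Delta_i(e\mid S)=f_i(S\cup\{e\})-f_i(S)$ and $$\mathrm{OPT}=\max_{S_{\rm tr}\subseteq V,\,|S_{\rm tr}|\le l}\;\sum_{i=1}^m\;\max_{S_i\subseteq V,\,|S_i|\le k-l} f_i(S_{\rm tr}\cup S_i).$$ Algorithm 1: start with all sets empty. Phase 1: for $t=1,\dots,l$, choose $e^*\in\arg\max_{e\in V\setminus S_{\rm tr}}\sum_{i}\Delta_i(e\mid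 S_{\rm tr})$ and add it to $S_{\rm tr}$. Phase 2: for $t=1,\dots,k-l$ and each $i$, choose $e_i^*\in\arg\max_{e\in V\setminus(S_{\rm tr}\cup S_i)}\Delta_i(e\mid S_{\rm tr}\cup S_i)$ and add it to $S_i$. Algorithm 2: start with all sets empty. Phase 1: for each $i$ and $t=1,\dots,k-l$, choose $e_i^*\in\arg\max_{e\in V\setminus S_i}\Delta_i(e\mid S_i)$ and add it to $S_i$. Phase 2: for $t=1,\dots,l$, choose $e^*\in\arg\max_{e\in V\setminus S_{\rm tr}}\sum_i\Delta_i(e\mid S_{\rm tr}\cup S_i)$ and add it to $S_{\rm tr}$. Ties are broken arbitrarily. *)

From HB Require Import structures.
From mathcomp Require Import all_boot all_order all_algebra.
From mathcomp Require Import reals sequences exp.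
Set Implicit Arguments. Unset Strict Implicit. Unset Printing Implicit Defensive.
Import Order.TTheory GRing.Theory Num.Theory.
Local Open Scope ring_scope.

Section Defs.
Variables (R : realType) (V : finType).

Definition monotone (f : {set V} -> R) :=
  forall A B : {set V}, A \subset B -> f A <= f B.
Definition submodular (f : {set V} -> R) :=
  forall A B : {set V}, f (A :|: B) + f (A :&: B) <= f A + f B.

Definition delta (f : {set V} -> R) (S : {set V}) (e : V) : R := f (e |: S) - f S.

Definition greedy_step (F : {set V} -> V -> R) (A : {set V}) (x : V) : Prop :=
  x \notin A /\ forall e, e \notin A -> F A e <= F A x.

(* s is a sequence of greedy choices (in order, ties arbitrary); the current
   set before choosing x is B together with the elements already chosen. *)
Definition greedy (F : {set V} -> V -> R) (B : {set V}) (s : seq V) : Prop :=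
  forall s1 x s2, s = s1 ++ x :: s2 -> greedy_step F (B :|: [set y in s1]) x.

Variable m : nat.

(* Algorithm 1: tr = sequence of Phase 1 choices, S i = Phase 2 choices for i *)
Definition alg1 (f : 'I_m -> {set V} -> R) (k l : nat)
  (tr : seq V) (S : 'I_m -> seq V) : Prop :=
  [/\ size tr = l,
      greedy (fun A e => \sum_(i < m) delta (f i) A e) set0 tr &
      forall i, size (S i) = (k - l)%N /\
        greedy (fun A e => delta (f i) A e) [set y in tr] (S i)].

(* Algorithm 2: S i = Phase 1 choices for i, tr = Phase 2 choices *)
Definition alg2 (f : 'I_m -> {set V} -> R) (k l : nat)
  (tr : seq V) (S : 'I_m -> seq V) : Prop :=
  [/\ (forall i, size (S i) = (k - l)%N /\
        greedy (fun A e => delta (f i) A e) set0 (S i)),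
      size tr = l &
      greedy (fun A e => \sum_(i < m) delta (f i) (A :|: [set y in S i]) e)
        set0 tr].

(* OPT; the big max with default 0 is the true max since f >= 0 and the
   index sets contain set0 *)
Definition OPT (f : 'I_m -> {set V} -> R) (k l : nat) : R :=
  \big[Num.max/0]_(T : {set V} | (#|T| <= l)%N)
    \sum_(i < m) \big[Num.max/0]_(S : {set V} | (#|S| <= k - l)%N) f i (T :|: S).

End Defs.

From HB Require Import structures.
From mathcomp Require Import all_boot all_order all_algebra.
From mathcomp Require Import reals sequences exp.
From mathcomp Require Import lra.
Import Order.TTheory GRing.Theory Num.Theory.
Set Implicit Arguments. Unset Strict Implicit. Unset Printing Implicit Defensive.
Local Open Scope ring_scope.

(* Write c = 1 - 1/e, A1 = S_tr^(1), B1_i = S_i^(1),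
   B2_i = S_i^(2), and X = sum_i f_i(A1 u B2_i).
   (1) The classical greedy guarantee: p greedy steps from a base set B gain
       at least c * (F(B u T) - F(B)) for every T with |T| <= p.  It is
       proved by showing that the gap to B u T shrinks by a factor (1 - 1/p)
       at every step, and (1 - 1/p)^p <= 1/e.
   (2) Applied to Phase 2 of Algorithm 1 (for each f_i, base A1) and to
       Phase 2 of Algorithm 2 (for the monotone submodular function
       A |-> sum_i f_i(A u B2_i), base set0) it gives two guarantees.
   (3) A two-fold application of submodularity gives the exchange bound
       f(T u S) <= f(A u S) - f(A) + f(A u B) + f(T u B) - f(B); with the
       two guarantees it yields the symmetric estimate
       c * OPT <= (theta1 - beta) + (theta2 - gamma) + c * X.
   (4) Finally c * X is bounded by (theta2 - gamma) + c * gamma (guarantee of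
       Algorithm 2 at T = A1) and by (theta1 - beta) + c * beta (guarantee of
       Algorithm 1 at S = B2_i); each bound gives one of the two claims. *)

Section Submodularity.
Variables (R : realType) (V : finType).
Implicit Types (F : {set V} -> R) (A B S T W X Y Z : {set V}).

Lemma submodular_cover {F} (F_mono : monotone F) (F_sub : submodular F)
  {W X Y Z} : W \subset X :|: Y -> Z \subset X -> Z \subset Y ->
  F W + F Z <= F X + F Y.
Proof.
move=> sW sZX sZY; apply: le_trans (F_sub X Y).
by apply: lerD; apply: F_mono => //; rewrite subsetI sZX.
Qed.

Lemma exchange_bound {F} : monotone F -> submodular F -> forall A B S T,
  F (T :|: S) <= F (A :|: S) - F A + F (A :|: B) + F (T :|: B) - F B.
Proof.
move=> F_mono F_sub A B S T.
have cover_TS : T :|: S \subset (S :|: B) :|: (T :|: B).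
  by apply/subsetP=> x; rewrite !inE => /orP[] ->; rewrite ?orbT.
have cover_SB : S :|: B \subset (A :|: S) :|: (A :|: B).
  by apply/subsetP=> x; rewrite !inE => /orP[] ->; rewrite ?orbT.
have h1 := submodular_cover F_mono F_sub cover_TS (subsetUr _ _) (subsetUr _ _).
have h2 := submodular_cover F_mono F_sub cover_SB (subsetUl _ _) (subsetUl _ _).
lra.
Qed.

Lemma marginal_sum_bound {F} : monotone F -> submodular F -> forall A ts,
  F (A :|: [set x in ts]) <= F A + \sum_(t <- ts) delta F A t.
Proof.
move=> F_mono F_sub A; elim=> [|t ts IH].
  by rewrite big_nil addr0 (_ : [set x in [::]] = set0) ?setU0 //; apply/setP=> x; rewrite !inE.
have -> : [set x in t :: ts] = t |: [set x in ts] by apply/setP=> x; rewrite !inE.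
have cover : A :|: (t |: [set x in ts]) \subset (A :|: [set x in ts]) :|: (t |: A).
  by apply/subsetP=> y; rewrite !inE => /orP[|/orP[]] ->; rewrite ?orbT.
have := submodular_cover F_mono F_sub cover (subsetUl _ _) (subsetU1 _ _).
rewrite big_cons /delta; lra.
Qed.

Lemma greedy_choice_gain {F} : monotone F -> submodular F -> forall A T x,
  greedy_step (delta F) A x -> F (A :|: T) - F A <= #|T|%:R * delta F A x.
Proof.
move=> F_mono F_sub A T x [_ x_best].
have := marginal_sum_bound F_mono F_sub A (enum T).
have -> : [set y in enum T] = T by apply/setP=> y; rewrite !inE mem_enum.
rewrite big_enum /= => union_le.
suff : \sum_(t in T) delta F A t <= \sum_(t in T) delta F A x.
  by rewrite sumr_const -mulr_natl; lra.
apply: ler_sum => t _; have [tA | /x_best //] := boolP (t \in A).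
have x_gain0 : 0 <= delta F A x by rewrite subr_ge0; apply: F_mono; apply: subsetU1.
by rewrite /delta (setUidPr _) ?sub1set // subrr.
Qed.

End Submodularity.

Section Reals.
Variable R : realType.

(* (1 - 1/p)^p <= 1/e, from 1 + x <= e^x. *)
Lemma one_sub_inv_exp_le (p : nat) : (0 < p)%N ->
  (1 - (p%:R : R)^-1) ^+ p <= (expR 1)^-1.
Proof.
move=> p_gt0; have P_gt0 : 0 < p%:R :> R by rewrite ltr0n.
have q_ge0 : 0 <= 1 - (p%:R : R)^-1 by rewrite subr_ge0 invf_le1 // ler1n.
apply: le_trans (_ : expR (- (p%:R)^-1) ^+ p <= _).
  by apply: lerXn2r; rewrite ?nnegrE ?(ltW (expR_gt0 _)) //; apply: expR_ge1Dx.
by rewrite -expRM_natr mulNr mulVf ?gt_eqF // expRN.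
Qed.

Lemma gap_decay (D : nat -> R) (p : nat) : (0 < p)%N -> 0 <= D 0%N ->
  (forall j, (j < p)%N -> D j <= p%:R * (D j - D j.+1)) ->
  D p <= (expR 1)^-1 * D 0%N.
Proof.
move=> p_gt0 D0_ge0 step; set q : R := 1 - p%:R^-1.
have P_gt0 : 0 < p%:R :> R by rewrite ltr0n.
have q_ge0 : 0 <= q by rewrite subr_ge0 invf_le1 // ler1n.
have contract j : (j < p)%N -> D j.+1 <= q * D j.
  have Pinv_ge0 : 0 <= (p%:R : R)^-1 by rewrite invr_ge0 ltW.
  move=> /step le_gap; have := ler_wpM2l Pinv_ge0 le_gap.
  by rewrite mulrA mulVf ?gt_eqF // mul1r /q mulrBl mul1r; lra.
have geometric j : (j <= p)%N -> D j <= q ^+ j * D 0%N.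
  elim: j => [|j IH] le_jp; first by rewrite expr0 mul1r.
  apply: le_trans (contract j le_jp) _; rewrite exprS -mulrA.
  by apply: ler_wpM2l => //; apply: IH; apply: ltnW.
apply: le_trans (geometric p (leqnn p)) _.
by apply: ler_wpM2r => //; apply: one_sub_inv_exp_le.
Qed.

Lemma scaled_bigmax_le (I : finType) (P : pred I) (G : I -> R) (c z : R) :
  0 <= c -> 0 <= z -> (forall i, P i -> c * G i <= z) ->
  c * \big[Num.max/0]_(i | P i) G i <= z.
Proof.
move=> c_ge0 z_ge0 G_le; apply: (big_ind (fun y => c * y <= z)) => //.
  by rewrite mulr0.
by move=> x y hx hy; rewrite maxEle; case: ifP.
Qed.

End Reals.

Section Greedy.
Variables (R : realType) (V : finType).
Implicit Types (F : {set V} -> R) (B T : {set V}).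

Lemma greedy_ext (F1 F2 : {set V} -> V -> R) B s :
  (forall A e, F1 A e = F2 A e) -> greedy F1 B s -> greedy F2 B s.
Proof.
move=> eqF g s1 x s2 split_s; have [x_new x_best] := g s1 x s2 split_s.
by split=> // e e_new; rewrite -!eqF; apply: x_best.
Qed.

Lemma set_take_nth (s : seq V) x0 j : (j < size s)%N ->
  [set y in take j.+1 s] = nth x0 s j |: [set y in take j s].
Proof.
by move=> lt_js; apply/setP=> y; rewrite (take_nth x0 lt_js) !inE mem_rcons inE.
Qed.

Lemma greedy_guarantee {F} : monotone F -> submodular F -> forall B s T,
  greedy (delta F) B s -> (#|T| <= size s)%N ->
  (1 - (expR 1)^-1) * (F (B :|: T) - F B) <= F (B :|: [set y in s]) - F B.
Proof.
move=> F_mono F_sub B s T g le_Ts.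
have set_nil : [set y in [::]] = set0 :> {set V} by apply/setP=> y; rewrite !inE.
have [s_nil | s_gt0] := posnP (size s).
  move: le_Ts; rewrite s_nil leqn0 cards_eq0 => /eqP ->.
  by rewrite (size0nil s_nil) set_nil !setU0 subrr mulr0.
have x0 : V by case: s s_gt0 g le_Ts => [|y] // *; exact: y.
pose Aj j := B :|: [set y in take j s].
pose D j := F (B :|: T) - F (Aj j).
have decay : D (size s) <= (expR 1)^-1 * D 0%N.
  apply: gap_decay => //.
    by rewrite /D /Aj take0 set_nil setU0 subr_ge0; apply: F_mono; apply: subsetUl.
  move=> j lt_js; set x := nth x0 s j.
  have [x_new x_best] : greedy_step (delta F) (Aj j) x.
    by apply: (g _ _ (drop j.+1 s)); rewrite -drop_nth ?cat_take_drop.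
  have Aj_succ : Aj j.+1 = x |: Aj j by rewrite /Aj (set_take_nth x0 lt_js) setUCA.
  have gain := greedy_choice_gain F_mono F_sub T (conj x_new x_best).
  have BT_le : F (B :|: T) <= F (Aj j :|: T).
    by apply: F_mono; apply: setSU; apply: subsetUl.
  have gain_ge0 : 0 <= delta F (Aj j) x.
    by rewrite subr_ge0; apply: F_mono; apply: subsetU1.
  have T_le : #|T|%:R * delta F (Aj j) x <= (size s)%:R * delta F (Aj j) x.
    by apply: ler_wpM2r; rewrite ?ler_nat.
  by rewrite /D Aj_succ; move: gain T_le; rewrite /delta; lra.
move: decay; rewrite /D /Aj take_size take0 set_nil setU0; lra.
Qed.

End Greedy.

Section Instances.
Variables (R : realType) (V : finType) (m : nat).
Variable f : 'I_m -> {set V} -> R.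
Hypotheses (f_mono : forall i, monotone (f i)) (f_sub : forall i, submodular (f i)).

Definition shifted_sum (Y : 'I_m -> {set V}) (A : {set V}) : R :=
  \sum_(i < m) f i (A :|: Y i).

(* A sum of shifted monotone submodular functions is again monotone and
   submodular, so the greedy guarantee applies to Phase 2 of Algorithm 2. *)
Lemma shifted_sum_monotone Y : monotone (shifted_sum Y).
Proof. by move=> A B sAB; apply: ler_sum => i _; apply: f_mono; apply: setSU. Qed.

Lemma shifted_sum_submodular Y : submodular (shifted_sum Y).
Proof.
move=> A B; rewrite /shifted_sum -!big_split /=; apply: ler_sum => i _.
by rewrite setUIl -[in X in f i X](setUid (Y i)) setUACA; apply: f_sub.
Qed.

Lemma alg1_guarantee k l tr S : alg1 f k l tr S -> forall i (X : {set V}),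
  (#|X| <= k - l)%N ->
  (1 - (expR 1)^-1) * (f i ([set y in tr] :|: X) - f i [set y in tr])
  <= f i ([set y in tr] :|: [set y in S i]) - f i [set y in tr].
Proof.
case=> _ _ hS i X le_X; have [size_Si g] := hS i.
by apply: greedy_guarantee => //; rewrite size_Si.
Qed.

Lemma alg2_guarantee k l tr S : alg2 f k l tr S -> forall T : {set V},
  (#|T| <= l)%N ->
  (1 - (expR 1)^-1) * (\sum_(i < m) f i (T :|: [set y in S i])
                        - \sum_(i < m) f i [set y in S i])
  <= \sum_(i < m) f i ([set y in tr] :|: [set y in S i])
     - \sum_(i < m) f i [set y in S i].
Proof.
case=> _ size_tr g T le_T; pose Y i := [set y in S i].
have := @greedy_guarantee R V _ (shifted_sum_monotone Y) (shifted_sum_submodular Y) set0 tr T.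
have sum_set0 : \sum_(i < m) f i (set0 :|: Y i) = \sum_(i < m) f i (Y i).
  by apply: eq_bigr => i _; rewrite set0U.
rewrite /shifted_sum sum_set0 !set0U; apply; last by rewrite size_tr.
apply: greedy_ext g => A e; rewrite /delta -sumrB.
by apply: eq_bigr => i _; rewrite setUA.
Qed.

End Instances.

Section OptBound.
Variables (R : realType) (V : finType) (m k l : nat).
Variable f : 'I_m -> {set V} -> R.
Hypotheses (f_ge0 : forall i A, 0 <= f i A) (f_mono : forall i, monotone (f i))
  (f_sub : forall i, submodular (f i)).
Variables (A1 A2 : {set V}) (B1 B2 : 'I_m -> {set V}).

Hypothesis guarantee1 : forall i (X : {set V}), (#|X| <= k - l)%N ->
  (1 - (expR 1)^-1) * (f i (A1 :|: X) - f i A1) <= f i (A1 :|: B1 i) - f i A1.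
Hypothesis guarantee2 : forall T : {set V}, (#|T| <= l)%N ->
  (1 - (expR 1)^-1) * (\sum_(i < m) f i (T :|: B2 i) - \sum_(i < m) f i (B2 i))
  <= \sum_(i < m) f i (A2 :|: B2 i) - \sum_(i < m) f i (B2 i).

Let c : R := 1 - (expR 1)^-1.

Lemma c_ge0 : 0 <= c.
Proof.
by rewrite subr_ge0 invf_le1 ?expR_gt0 //; have := expR_ge1Dx (1 : R); lra.
Qed.

Lemma completion_bound i (T : {set V}) :
  c * \big[Num.max/0]_(S : {set V} | (#|S| <= k - l)%N) f i (T :|: S)
  <= (f i (A1 :|: B1 i) - f i A1)
     + c * (f i (A1 :|: B2 i) + f i (T :|: B2 i) - f i (B2 i)).
Proof.
have gain1_ge0 : 0 <= f i (A1 :|: B1 i) - f i A1.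
  by rewrite subr_ge0; apply: f_mono; apply: subsetUl.
have gain2_ge0 : 0 <= f i (T :|: B2 i) - f i (B2 i).
  by rewrite subr_ge0; apply: f_mono; apply: subsetUr.
apply: scaled_bigmax_le c_ge0 _ _ => [|S le_S].
  by apply: addr_ge0 => //; apply: mulr_ge0 c_ge0 _; have := f_ge0 i (A1 :|: B2 i); lra.
have exch := exchange_bound (f_mono i) (f_sub i) A1 (B2 i) S T.
have := ler_wpM2l c_ge0 exch; have := @guarantee1 i S le_S; rewrite /c; lra.
Qed.

Lemma opt_bound :
  c * OPT f k l <= (\sum_(i < m) f i (A1 :|: B1 i) - \sum_(i < m) f i A1)
                 + (\sum_(i < m) f i (A2 :|: B2 i) - \sum_(i < m) f i (B2 i))
                 + c * \sum_(i < m) f i (A1 :|: B2 i).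
Proof.
have gain1_ge0 : \sum_(i < m) f i A1 <= \sum_(i < m) f i (A1 :|: B1 i).
  by apply: ler_sum => i _; apply: f_mono; apply: subsetUl.
have gain2_ge0 : \sum_(i < m) f i (B2 i) <= \sum_(i < m) f i (A2 :|: B2 i).
  by apply: ler_sum => i _; apply: f_mono; apply: subsetUr.
have X_ge0 : 0 <= c * \sum_(i < m) f i (A1 :|: B2 i).
  by apply: mulr_ge0 c_ge0 (sumr_ge0 _ _).
apply: scaled_bigmax_le c_ge0 _ _ => [|T le_T]; first lra.
rewrite mulr_sumr; apply: le_trans (ler_sum _ (fun i _ => completion_bound i T)) _.
have := guarantee2 le_T.
rewrite big_split /= -mulr_sumr !sumrB big_split /= -/c; lra.
Qed.

End OptBound.

Theorem mainTheorem8 (R : realType) (V : finType) (m k l : nat)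
  (f : 'I_m -> {set V} -> R)
  (hl : (1 <= l)%N) (hlk : (l < k)%N) (hkn : (k <= #|V|)%N)
  (f_ge0 : forall i A, 0 <= f i A)
  (f_mono : forall i, monotone (f i))
  (f_sub : forall i, submodular (f i))
  (tr1 : seq V) (S1 : 'I_m -> seq V) (tr2 : seq V) (S2 : 'I_m -> seq V)
  (h1 : alg1 f k l tr1 S1) (h2 : alg2 f k l tr2 S2) :
  let theta1 := \sum_(i < m) f i ([set y in tr1] :|: [set y in S1 i]) in
  let theta2 := \sum_(i < m) f i ([set y in tr2] :|: [set y in S2 i]) in
  let beta := \sum_(i < m) f i [set y in tr1] in
  let gamma := \sum_(i < m) f i [set y in S2 i] in
  theta1 >= (1 - (expR 1)^-1) * (OPT f k l - gamma) + beta - 2 * (theta2 - gamma)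
  /\
  theta2 >= (1 - (expR 1)^-1) * (OPT f k l - beta) + gamma - 2 * (theta1 - beta).
Proof.
move=> theta1 theta2 beta gamma.
have G1 := alg1_guarantee f_mono f_sub h1.
have G2 := alg2_guarantee f_mono f_sub h2.
have [size_tr1 _ _] := h1; have [size_S2 _ _] := h2.
have le_tr1 : (#|[set y in tr1]| <= l)%N by rewrite cardsE -size_tr1 card_size.
have le_S2 i : (#|[set y in S2 i]| <= k - l)%N.
  by rewrite cardsE -(size_S2 i).1 card_size.
have opt := opt_bound f_ge0 f_mono f_sub G1 G2.
(* c * X, with X = sum_i f_i(A1 u B2_i), is bounded through either algorithm. *)
have X_by_alg2 := G2 _ le_tr1.
have X_by_alg1 : (1 - (expR 1)^-1) *
    (\sum_(i < m) f i ([set y in tr1] :|: [set y in S2 i]) - beta) <= theta1 - beta.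
  by rewrite /beta /theta1 -!sumrB mulr_sumr; apply: ler_sum => i _; apply: G1.
by move: opt X_by_alg2 X_by_alg1; rewrite -/theta1 -/theta2 -/beta -/gamma !mulrBr; lra.
Qed.
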